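(* Let $N=\{1,\dots,n\}$ and let $F:2^N\to\mathbb{R}$ be quasi-submodular. For the sequences $(X_t),(Y_t)$ generated by the maximization procedure (described in the context), at every iteration $t$ other than the last one (i.e., whenever $X_{t+1}\ne X_t$ or $Y_{t+1}\ne Y_t$), we have $F(X_{t+1})>F(X_t)$ or $F(Y_{t+1})>F(Y_t)$.
   Context: For $A\subseteq N$ and $i\in N$, write $A+i=A\cup\{i\}$, $A-i=A\setminus\{i\}$, and $F(i\mid A)=F(A+i)-F(A)$. $F$ is quasi-submodular if for all $X,Y\subseteq N$ both hold: $F(X\cap Y)\ge F(X)\Rightarrow F(Y)\ge F(X\cup Y)$, and $F(X\cap Y)>F(X)\Rightarrow F(Y)>F(X\cup Y)$. Maximization procedure: set $X_0=\emptyset$, $Y_0=N$; for $t=0,1,2,\dots$: let $U_t=\{u\in Y_t\setminus X_t: F(u\mid Y_t-u)>0\}$ and $X_{t+1}=X_t\cup U_t$; let $D_t=\{d\in Y_t\setminus X_t: F(d\mid X_t)<0\}$ and $Y_{t+1}=Y_t\setminus D_t$; if $X_{t+1}=X_t$ and $Y_{t+1}=Y_t$, stop and output $[X_t,Y_t]$; otherwise continue with $t+1$. *)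

(* Ground set N = {1..n} is modelled as 'I_n; subsets as {set 'I_n}. *)
From mathcomp Require Import all_boot all_order all_algebra.
Set Implicit Arguments. Unset Strict Implicit. Unset Printing Implicit Defensive.
Import Order.TTheory GRing.Theory Num.Theory.
Local Open Scope ring_scope.

Section QS.
Variables (R : realFieldType) (n : nat) (F : {set 'I_n} -> R).

Definition marg (i : 'I_n) (A : {set 'I_n}) : R := F (i |: A) - F A.

Definition quasi_submodular : Prop :=
  forall X Y : {set 'I_n},
    (F (X :&: Y) >= F X -> F Y >= F (X :|: Y)) /\
    (F (X :&: Y) > F X -> F Y > F (X :|: Y)).

Definition Uset (X Y : {set 'I_n}) : {set 'I_n} :=
  [set u in Y :\: X | marg u (Y :\ u) > 0].
Definition Dset (X Y : {set 'I_n}) : {set 'I_n} :=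
  [set d in Y :\: X | marg d X < 0].

Definition mstep (p : {set 'I_n} * {set 'I_n}) : {set 'I_n} * {set 'I_n} :=
  (p.1 :|: Uset p.1 p.2, p.2 :\: Dset p.1 p.2).

(* (X_t, Y_t), starting from (X_0, Y_0) = (emptyset, N).  Once the procedure
   stops the step is the identity, so the sequence is constant afterwards. *)
Definition XY (t : nat) : {set 'I_n} * {set 'I_n} := iter t mstep (set0, setT).
Definition Xs (t : nat) := (XY t).1.
Definition Ys (t : nat) := (XY t).2.
End QS.

(* Quasi-submodularity makes the sign of a marginal gain monotone along
   chains: F(i | B) > 0 forces F(i | A) > 0, and F(i | A) < 0 forces
   F(i | B) < 0, for A ⊆ B ∌ i.  Hence every u in U_t has a positive gain
   over any set between X_t and Y_t - u, so adding the elements of U_t to X_t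
   one at a time strictly increases F; dually, removing the elements of D_t
   from Y_t one at a time strictly increases F.  If the step changes anything,
   one of U_t, D_t is nonempty. *)
From mathcomp Require Import all_boot all_order all_algebra.
Import Order.TTheory GRing.Theory Num.Theory.
Set Implicit Arguments.
Unset Strict Implicit.
Unset Printing Implicit Defensive.

Local Open Scope ring_scope.

Section ChainGain.
Variables (R : realFieldType) (n : nat).
Implicit Types (G : {set 'I_n} -> R) (A B S Z W : {set 'I_n}).

Lemma lt_setU G A S : S != set0 -> [disjoint S & A] ->
  (forall u Z, u \in S -> A \subset Z -> Z \subset A :|: S -> u \notin Z ->
     0 < marg G u Z) ->
  G A < G (A :|: S).
Proof.
elim: {S}_.+1 {-2}S (ltnSn #|S|) => // k IH S ltSk S0 dSA gain.
have [u uS] := set0Pn _ S0.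
have uA : u \notin A by rewrite (disjointFr dSA uS).
have sAS : A :|: (S :\ u) \subset A :|: S by rewrite setUS ?subsetDl.
have last_step : G (A :|: (S :\ u)) < G (A :|: S).
  rewrite -{2}(setD1K uS) setUCA -subr_gt0.
  apply: gain => //; first exact: subsetUl.
  by rewrite in_setU negb_or uA !inE eqxx.
have [S'0|S'n0] := eqVneq (S :\ u) set0; first by rewrite S'0 setU0 in last_step.
apply: lt_trans last_step; apply: IH => //.
- by rewrite -ltnS (leq_trans _ ltSk) // ltnS (cardsD1 u S) uS.
- by apply: disjointWl dSA; apply: subsetDl.
- by move=> v Z /setD1P[_ vS] sAZ sZ; apply: gain => //; apply: subset_trans sAS.
Qed.

(* Removing [S] from [B] is adding [S] to [~: B] for the function [G \o setC]. *)
Lemma lt_setD G B S : S != set0 -> S \subset B ->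
  (forall d W, d \in S -> B :\: S \subset W :\ d -> W \subset B -> d \in W ->
     marg G d (W :\ d) < 0) ->
  G B < G (B :\: S).
Proof.
move=> S0 sSB loss.
have -> : B :\: S = ~: (~: B :|: S) by rewrite setCU setCK setDE.
rewrite -{1}(setCK B); apply: (lt_setU (G := G \o @setC _)) => //.
  by rewrite disjoints_subset setCK.
move=> d Z dS sBZ sZ dZ; rewrite /marg /= -oppr_lt0 opprB.
have dCZ : d \in ~: Z by rewrite inE.
have -> : ~: (d |: Z) = ~: Z :\ d by rewrite setCU setIC setDE.
rewrite -{1}(setD1K dCZ) -/(marg G d _).
apply: loss => //; last by rewrite -setCS setCK.
by rewrite subsetD1 subsetC setCD sZ !inE dS.
Qed.

End ChainGain.

Section QuasiSubmodularProcedure.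
Variables (R : realFieldType) (n : nat) (F : {set 'I_n} -> R).
Hypothesis qsF : quasi_submodular F.
Implicit Types (A B X Y : {set 'I_n}).

Lemma setU1I_sub A B i : A \subset B -> i \notin B -> (i |: A) :&: B = A.
Proof.
move=> sAB iB; rewrite setIUl (setIidPl sAB) disjoint_setI0 ?set0U //.
by rewrite disjoints1.
Qed.

Lemma marg_gt0_sub A B i : A \subset B -> i \notin B ->
  0 < marg F i B -> 0 < marg F i A.
Proof.
move=> sAB iB; rewrite !subr_gt0 !ltNge; apply: contra.
have [qs_le _] := qsF (i |: A) B.
by rewrite setU1I_sub // -setUA (setUidPr sAB) in qs_le.
Qed.

Lemma marg_lt0_sup A B i : A \subset B -> i \notin B ->
  marg F i A < 0 -> marg F i B < 0.
Proof.
move=> sAB iB; rewrite !subr_lt0.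
have [_ qs_lt] := qsF (i |: A) B.
by rewrite setU1I_sub // -setUA (setUidPr sAB) in qs_lt.
Qed.

Lemma disjoint_Uset_Dset X Y : X \subset Y -> [disjoint Uset F X Y & Dset F X Y].
Proof.
move=> sXY; apply/pred0P => u /=; rewrite !inE.
apply/negP => /andP[/andP[/andP[uX _] gainY] /andP[_ lossX]].
have : 0 < marg F u X.
  apply: (marg_gt0_sub _ _ gainY); last by rewrite !inE eqxx.
  by rewrite subsetD1 sXY.
by rewrite ltNge (ltW lossX).
Qed.

Lemma Uset_sub X Y : Uset F X Y \subset Y :\: X.
Proof. by rewrite /Uset setIdE subsetIl. Qed.

Lemma Dset_sub X Y : Dset F X Y \subset Y :\: X.
Proof. by rewrite /Dset setIdE subsetIl. Qed.

Lemma disjoint_Uset X Y : [disjoint Uset F X Y & X].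
Proof. by rewrite disjoints_subset (subset_trans (Uset_sub _ _)) // setDE subsetIr. Qed.

Lemma disjoint_Dset X Y : [disjoint Dset F X Y & X].
Proof. by rewrite disjoints_subset (subset_trans (Dset_sub _ _)) // setDE subsetIr. Qed.

Lemma Xs_sub_Ys t : Xs F t \subset Ys F t.
Proof.
elim: t => [|t IH]; first exact: sub0set.
rewrite /Xs /Ys /XY iterS -/(XY F t) /mstep /= -/(Xs F t) -/(Ys F t).
rewrite subUset !subsetD IH (disjoint_Uset_Dset IH) !andbT /=.
rewrite (subset_trans (Uset_sub _ _) (subsetDl _ _)) /=.
by rewrite disjoint_sym disjoint_Dset.
Qed.

Lemma lt_setU_Uset X Y : X \subset Y -> Uset F X Y != set0 ->
  F X < F (X :|: Uset F X Y).
Proof.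
move=> sXY U0; apply: lt_setU => // [|u Z uU sXZ sZ uZ]; first exact: disjoint_Uset.
move: (uU); rewrite inE => /andP[/setDP[uY _] gainY].
apply: (marg_gt0_sub _ _ gainY); last by rewrite !inE eqxx.
rewrite subsetD1 uZ andbT (subset_trans sZ) // subUset sXY.
exact: subset_trans (Uset_sub _ _) (subsetDl _ _).
Qed.

Lemma lt_setD_Dset X Y : X \subset Y -> Dset F X Y != set0 ->
  F Y < F (Y :\: Dset F X Y).
Proof.
move=> sXY D0; apply: lt_setD => // [|d W dD sW _ _].
  exact: subset_trans (Dset_sub _ _) (subsetDl _ _).
move: (dD); rewrite inE => /andP[/setDP[_ dX] lossX].
apply: (marg_lt0_sup _ _ lossX); last by rewrite !inE eqxx.
by apply: subset_trans sW; rewrite subsetD sXY disjoint_sym disjoint_Dset.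
Qed.

End QuasiSubmodularProcedure.

Theorem lemma6 (R : realFieldType) (n : nat) (F : {set 'I_n} -> R) :
  quasi_submodular F ->
  forall t : nat,
    (Xs F t.+1 != Xs F t) || (Ys F t.+1 != Ys F t) ->
    (F (Xs F t.+1) > F (Xs F t)) \/ (F (Ys F t.+1) > F (Ys F t)).
Proof.
move=> qsF t.
have sXY := Xs_sub_Ys qsF t.
have -> : Xs F t.+1 = Xs F t :|: Uset F (Xs F t) (Ys F t) by [].
have -> : Ys F t.+1 = Ys F t :\: Dset F (Xs F t) (Ys F t) by [].
have [U0|U0] := eqVneq (Uset F (Xs F t) (Ys F t)) set0; last first.
  by move=> _; left; apply: lt_setU_Uset.
rewrite U0 setU0 eqxx /= => changed; right; apply: lt_setD_Dset => //.
by apply: contraNneq changed => ->; rewrite setD0.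
Qed.
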